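(* For every integer $d\ge 200$ and every even integer $n\le 2^{\lfloor d/200\rfloor}$ there is an $(n,d,\alpha,\beta)$-sequence with $\alpha=\sqrt{2\ln(d)/n}$ and $\beta=1/16$.
   Context: Let $X$ be a set with $|X|$ even. An equitable bipartition of $X$ is a partition $(X_0,X_1)$ with $|X_0|=|X_1|$. A sequence $\mathcal B=(X_{1,0},X_{1,1}),\dots,(X_{d,0},X_{d,1})$ of equitable bipartitions of $X$ is $\alpha$-orthogonal if $|X_{i,\ell}\cap X_{j,\ell'}|\le(\frac14+\alpha)|X|$ for all $1\le i<j\le d$ and $\ell,\ell'\in\{0,1\}$; it is $\beta$-balanced if for every $x\ne y\in X$ the number of indices $i$ with $x,y\in X_{i,0}$ or $x,y\in X_{i,1}$ is at most $(\frac12+\beta)d$. It is an $(n,d,\alpha,\beta)$-sequence if $|X|=n$, $|\mathcal B|=d$, and $\mathcal B$ is both $\alpha$-orthogonal and $\beta$-balanced. *)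

From mathcomp Require Import all_boot all_order all_algebra.
From mathcomp Require Import reals exp.
Set Implicit Arguments. Unset Strict Implicit. Unset Printing Implicit Defensive.
Import Order.TTheory GRing.Theory Num.Theory.
Local Open Scope ring_scope.

Definition equitable_bipartition (n : nat) (P : {set 'I_n} * {set 'I_n}) : bool :=
  [&& P.1 :&: P.2 == set0, P.1 :|: P.2 == [set: 'I_n] & #|P.1| == #|P.2|].

(* part l of a bipartition: l = false is X_{.,0}, l = true is X_{.,1} *)
Definition bpart (n : nat) (P : {set 'I_n} * {set 'I_n}) (l : bool) : {set 'I_n} :=
  if l then P.2 else P.1.

(* A sequence of d bipartitions, indexed by 'I_d (i.e. 1..d shifted to 0..d-1). *)
Definition alpha_orthogonal (R : realType) (n d : nat)
    (B : 'I_d -> {set 'I_n} * {set 'I_n}) (alpha : R) : Prop :=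
  forall (i j : 'I_d) (l l' : bool), (i < j)%N ->
    (#|bpart (B i) l :&: bpart (B j) l'|%:R : R) <= (4^-1 + alpha) * n%:R.

Definition beta_balanced (R : realType) (n d : nat)
    (B : 'I_d -> {set 'I_n} * {set 'I_n}) (beta : R) : Prop :=
  forall x y : 'I_n, x != y ->
    (#|[set i : 'I_d | ((x \in (B i).1) && (y \in (B i).1))
                       || ((x \in (B i).2) && (y \in (B i).2))]|%:R : R)
      <= (2^-1 + beta) * d%:R.

Definition ndab_sequence (R : realType) (n d : nat)
    (B : 'I_d -> {set 'I_n} * {set 'I_n}) (alpha beta : R) : Prop :=
  (forall i, equitable_bipartition (B i)) /\
  alpha_orthogonal B alpha /\ beta_balanced B beta.

From Stdlib Require Import Zify.
From mathcomp Require Import all_boot all_order all_algebra.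
From mathcomp Require Import reals exp sequences.
From mathcomp Require Import ring lra zify.
Set Implicit Arguments. Unset Strict Implicit. Unset Printing Implicit Defensive.
Import Order.TTheory GRing.Theory Num.Theory.
Local Open Scope ring_scope.

(* Write n = 2m and identify the ground set with the pairs (k, b), k < m, b : bool.  A
   vector v in {0,1}^m gives the equitable bipartition whose part l is
   {(k, b) | b (+) v k = l}.  For vectors w_1, ..., w_d, the set X_{i,l} ∩ X_{j,l'} has
   one point for each k with w_i k (+) w_j k = l (+) l', and distinct points (k, b),
   (k', b') share a part of bipartition i iff k != k' and w_i k (+) w_i k' = b (+) b'.
   So we need a 0/1 matrix w whose rows pairwise agree (up to a fixed pattern) on at most
   (1/2 + 2 alpha) m columns and whose columns pairwise agree on at most 9d/16 rows.
   Both are first-moment counts over all 2^(md) matrices.  For rows, weight each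
   agreement by e^(2 alpha): with cosh a <= e^(3a^2/2) and alpha^2 m = ln d, each pair of
   rows is bad for at most 2^(md) d^(-5/2) matrices, and 2 d^2 d^(-5/2) < 1/2.  For
   columns, weight agreements by 10 and disagreements by 8: each pair of columns is bad
   for at most 2^(md) / (4m^2) matrices because 4m^2 <= 4^(d/200). *)

Lemma prod_if_card (R : comPzSemiRingType) (I : finType) (P : pred I) (p q : R) :
  \prod_i (if P i then p else q) = p ^+ #|[set i | P i]| * q ^+ (#|I| - #|[set i | P i]|).
Proof.
rewrite (bigID P) /=; under eq_bigr => i Pi do rewrite Pi.
under [X in _ * X]eq_bigr => i nPi do rewrite (negbTE nPi).
by rewrite !prodr_const cardsE -(cardC P) addKn.
Qed.

Lemma sum_weight_hits (R : comPzSemiRingType) (I V : finType) (P : pred V) (p q : R) :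
  \sum_(w : {ffun I -> V}) p ^+ #|[set i | P (w i)]| * q ^+ (#|I| - #|[set i | P (w i)]|)
    = (p *+ #|P| + q *+ #|[predC P]|) ^+ #|I|.
Proof.
under eq_bigr => w _ do rewrite -(prod_if_card (fun i => P (w i))).
rewrite -(bigA_distr_bigA (fun _ v => if P v then p else q)) prodr_const.
congr (_ ^+ _); rewrite (bigID P) /= -!sumr_const.
by congr (_ + _); apply: eq_bigr => v; [move=> -> | move/negbTE ->].
Qed.

Lemma card_hits_le (R : numDomainType) (I V : finType) (P : pred V) (Q : pred nat)
    (p q t : R) :
  0 <= p -> 0 <= q ->
  (forall s, (s <= #|I|)%N -> Q s -> t <= p ^+ s * q ^+ (#|I| - s)) ->
  #|[set w : {ffun I -> V} | Q #|[set i | P (w i)]|]|%:R * t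
    <= (p *+ #|P| + q *+ #|[predC P]|) ^+ #|I|.
Proof.
move=> p_ge0 q_ge0 Qt; rewrite -sum_weight_hits mulr_natl -sumr_const.
rewrite [leRHS](bigID (mem [set w : {ffun I -> V} | Q #|[set i | P (w i)]|])) /=.
rewrite -[leLHS]addr0 lerD ?sumr_ge0 // => [|w _]; last by rewrite mulr_ge0 ?exprn_ge0.
by apply: ler_sum => w; rewrite inE; apply: Qt; rewrite max_card.
Qed.

Lemma card_bigcup_le (I T : finType) (P : pred I) (F : I -> {set T}) :
  (#|\bigcup_(i | P i) F i| <= \sum_(i | P i) #|F i|)%N.
Proof.
elim/big_ind2: _ => [|m A n B lem len|//]; first by rewrite cards0.
exact: leq_trans (leq_card_setU A B).1 (leq_add lem len).
Qed.

Definition ffun_tr (I J : finType) (T : Type) (w : {ffun I -> {ffun J -> T}}) :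
  {ffun J -> {ffun I -> T}} := [ffun j => [ffun i => w i j]].

Lemma ffun_trK (I J : finType) (T : Type) : cancel (@ffun_tr I J T) (@ffun_tr J I T).
Proof. by move=> w; apply/ffunP => i; apply/ffunP => j; rewrite !ffunE. Qed.

Lemma card_ffun_tr (I J T : finType) (Q : pred {ffun J -> {ffun I -> T}}) :
  #|[set w : {ffun I -> {ffun J -> T}} | Q (ffun_tr w)]| = #|[set u | Q u]|.
Proof.
rewrite -(on_card_preimset (onW_bij _ (Bijective (@ffun_trK I J T) (@ffun_trK J I T)))).
by apply: eq_card => w; rewrite !inE.
Qed.

Lemma card_xor_coords (J : finType) (k k' : J) (s : bool) : k != k' ->
  (#|[pred v : {ffun J -> bool} | v k (+) v k' == s]| * 2 = 2 ^ #|J|)%N.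
Proof.
move=> kk'; pose flip (v : {ffun J -> bool}) := [ffun x => (x == k) (+) v x].
have flipK : involutive flip by move=> v; apply/ffunP => x; rewrite !ffunE addbA addbb.
have card_flip b : #|[set v : {ffun J -> bool} | v k (+) v k' == ~~ b]|
                   = #|[set v : {ffun J -> bool} | v k (+) v k' == b]|.
  rewrite -(card_preimset _ (inv_inj flipK)); apply: eq_card => v.
  rewrite !inE !ffunE eqxx [k' == k]eq_sym (negbTE kk').
  by case: (v k) (v k') b => [] [] [].
have -> : (2 ^ #|J| = #|{ffun J -> bool}|)%N by rewrite card_ffun card_bool.
rewrite -(cardsC [set v : {ffun J -> bool} | v k (+) v k' == s]) muln2 -addnn.
have -> : #|[pred v : {ffun J -> bool} | v k (+) v k' == s]|
          = #|[set v : {ffun J -> bool} | v k (+) v k' == s]| by apply: eq_card => v; rewrite inE.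
congr (_ + _); rewrite -[LHS]card_flip.
by apply: eq_card => v; rewrite !inE; case: (_ (+) _) s => [] [].
Qed.

Lemma card_predC_xor_coords (J : finType) (k k' : J) (s : bool) : k != k' ->
  #|[predC [pred v : {ffun J -> bool} | v k (+) v k' == s]]|
    = #|[pred v : {ffun J -> bool} | v k (+) v k' == s]|.
Proof.
move=> kk'; apply/eqP; rewrite -(eqn_pmul2r (isT : (0 < 2)%N)) card_xor_coords //.
rewrite -(card_xor_coords (~~ s) kk'); apply/eqP; congr (_ * _)%N.
by apply: eq_card => v; rewrite !inE; case: (_ (+) _) s => [] [].
Qed.

Section NatBounds.
Local Open Scope nat_scope.

Lemma leq_pow_shift (p q u v n : nat) : q <= p -> u <= v <= n ->
  p ^ u * q ^ (n - u) <= p ^ v * q ^ (n - v).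
Proof.
move=> qp /andP[uv vn].
rewrite (_ : n - u = v - u + (n - v)); last by lia.
rewrite -[in p ^ v](subnKC uv) !expnD -!mulnA leq_mul2l leq_mul2r.
by case: (v - u) => [|e]; rewrite ?expn0 ?leq_exp2r ?qp ?orbT.
Qed.

Lemma leq_block_pow (a b c k e d : nat) : 0 < c -> 0 < k ->
  c * a ^ k <= b ^ k -> k * e <= d -> c ^ e * a ^ d <= b ^ d.
Proof.
move=> c_gt0 k_gt0 cab ked.
have ab : a <= b by rewrite -(leq_exp2r _ _ k_gt0) (leq_trans _ cab) ?leq_pmull.
rewrite -(subnKC ked) !expnD mulnA leq_mul //; last first.
  by case: (d - k * e) => [|r]; rewrite ?expn0 ?leq_exp2r.
by rewrite !expnM -expnMn; case: e {ked} => [|e]; rewrite ?expn0 ?leq_exp2r.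
Qed.

(* The bases are abstract so that no large numeral is ever unfolded. *)
Lemma leq_weight_of_margin (x w y z c e d S : nat) : 0 < x -> z <= y ->
  x ^ 16 * (w ^ 16) ^ 200 <= (y ^ 9 * z ^ 7) ^ 200 ->
  c <= x ^ e -> 200 * e <= d -> 9 * d < 16 * S -> S <= d ->
  c * w ^ d <= y ^ S * z ^ (d - S).
Proof.
move=> x_gt0 zy margin ce ed dS Sd.
rewrite -(@leq_exp2r _ _ 16) // !expnMn [(w ^ d) ^ 16]expnAC.
apply: (@leq_trans ((y ^ 9 * z ^ 7) ^ d)).
  apply: leq_trans (leq_block_pow _ _ margin ed) => //; last by rewrite expn_gt0 x_gt0.
  by rewrite [(x ^ 16) ^ e]expnAC leq_mul2r leq_exp2r ?ce ?orbT.
rewrite expnMn -!expnM; clear margin. (* lia would expand its powers *)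
have -> : 7 * d = 16 * d - 9 * d by lia.
have -> : (d - S) * 16 = 16 * d - S * 16 by lia.
by apply: leq_pow_shift zy _; apply/andP; split; lia.
Qed.

(* (10^9 8^7)^(1/16) exceeds the mean weight 9 by more than the factor 4^(1/200). *)
Lemma weight_margin : 4 ^ 16 * (9 ^ 16) ^ 200 <= (10 ^ 9 * 8 ^ 7) ^ 200.
Proof. by zify; vm_compute. Qed.

Lemma col_weight_le (c e d S : nat) : c <= 4 ^ e -> 200 * e <= d ->
  9 * d < 16 * S -> S <= d -> c * 9 ^ d <= 10 ^ S * 8 ^ (d - S).
Proof. exact: (@leq_weight_of_margin 4 9 10 8 c e d S isT isT weight_margin). Qed.

Lemma card_col_bad (I J : finType) (k k' : J) (s : bool) (c e : nat) :
  k != k' -> c <= 4 ^ e -> 200 * e <= #|I| ->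
  c * #|[set w : {ffun I -> {ffun J -> bool}} |
           9 * #|I| < 16 * #|[set i | w i k (+) w i k' == s]|]| <= (2 ^ #|J|) ^ #|I|.
Proof.
move=> kk' ce eI; set P := [pred v : {ffun J -> bool} | v k (+) v k' == s].
have hP : #|P| * 2 = 2 ^ #|J| := card_xor_coords s kk'.
have hC : #|[predC P]| = #|P| := card_predC_xor_coords s kk'.
have : (#|[set w : {ffun I -> {ffun J -> bool}} |
           (9 * #|I| < 16 * #|[set i | P (w i)]|)%N]|%:R * (c * 9 ^ #|I|)%:R
        <= (10%:R *+ #|P| + 8%:R *+ #|[predC P]| : rat) ^+ #|I|)%R.
  apply: (@card_hits_le _ _ _ P (fun S => 9 * #|I| < 16 * S)); [exact: ler0n..|].
  move=> S SI dS; rewrite -!natrX -natrM ler_nat.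
  exact: col_weight_le ce eI dS SI.
rewrite hC -mulrnDl -natrD -mulrnA -natrX -natrM ler_nat.
have -> : (10 + 8) * #|P| = 9 * 2 ^ #|J| by rewrite -hP; lia.
by rewrite expnMn mulnCA mulnA [X in _ <= X]mulnC leq_pmul2r ?expn_gt0.
Qed.

Lemma card_cols_bad (I J : finType) (e : nat) :
  4 * #|J| ^ 2 <= 4 ^ e -> 200 * e <= #|I| ->
  2 * #|\bigcup_(t : J * J * bool | t.1.1 != t.1.2)
         [set w : {ffun I -> {ffun J -> bool}} |
            9 * #|I| < 16 * #|[set i | w i t.1.1 (+) w i t.1.2 == t.2]|]|
    <= (2 ^ #|J|) ^ #|I|.
Proof.
move=> Je eI; set U := \bigcup_(t | _) _; have [J0 | J_gt0] := posnP #|J|.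
  rewrite (_ : U = set0) ?cards0 //.
  by apply/setP => w; rewrite inE; apply/bigcupP => -[[[k _] _] _ _]; move: (card0_eq J0 k).
rewrite -(@leq_pmul2l (2 * #|J| ^ 2)) ?muln_gt0 ?expn_gt0 ?J_gt0 //.
rewrite (_ : _ * (2 * _) = 4 * #|J| ^ 2 * #|U|); last by rewrite mulnCA mulnA (mulnA 2 2).
apply: leq_trans (leq_mul (leqnn _) (card_bigcup_le _ _)) _.
rewrite big_distrr /=; apply: leq_trans (_ : \sum_(t | t.1.1 != t.1.2) (2 ^ #|J|) ^ #|I| <= _).
  by apply: leq_sum => t tt; exact: card_col_bad tt Je eI.
rewrite sum_nat_const leq_mul2r; apply/orP; right.
by rewrite (leq_trans (max_card _)) // !card_prod card_bool mulnC mulnA.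
Qed.

End NatBounds.

Lemma expR_add_expRN_le (R : realType) (a : R) : 0 <= a <= 2 / 3 ->
  expR a + expR (- a) <= 2 * expR (3 / 2 * a ^+ 2).
Proof.
move=> /andP[a_ge0 a_le].
have E_gt0 := expR_gt0 a; have EF : expR a * expR (- a) = 1 by rewrite -expRD subrr expR0.
have := expR_ge1Dx a; have := expR_ge1Dx (- a); have := expR_ge1Dx (3 / 2 * a ^+ 2).
move: (expR a) (expR (- a)) E_gt0 EF => E F E_gt0 EF hq hF hE.
nra.
Qed.

Lemma card_row_bad (R : realType) (I J : finType) (i j : I) (c : bool) (a : R) :
  i != j -> 0 <= a <= 2 / 3 ->
  #|[set w : {ffun I -> {ffun J -> bool}} |
       (4^-1 + a) * (#|J| * 2)%:R < #|[set k | w i k (+) w j k == c]|%:R]|%:R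
    <= ((2 ^ #|J|) ^ #|I|)%:R * expR (- (5 / 2 * (a ^+ 2 * #|J|%:R))).
Proof.
move=> ij /andP[a_ge0 a_le]; set T := (4^-1 + a) * _.
set P := [pred u : {ffun I -> bool} | u i (+) u j == c].
have -> : #|[set w : {ffun I -> {ffun J -> bool}} |
              T < #|[set k | w i k (+) w j k == c]|%:R]|
          = #|[set u : {ffun J -> {ffun I -> bool}} | T < #|[set k | P (u k)]|%:R]|.
  rewrite -card_ffun_tr; apply: eq_card => w; rewrite !inE.
  by congr (_ < _%:R); apply: eq_card => k; rewrite !inE !ffunE.
have weight_ge S : T < S%:R -> expR (2 * a * T) <= expR (2 * a) ^+ S * 1 ^+ (#|J| - S).
  move=> TS; rewrite expr1n mulr1 -expRM_natr ler_expR.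
  by apply: ler_wpM2l; [rewrite mulr_ge0 | exact: ltW].
have bound := @card_hits_le R J _ P (fun S => T < S%:R) _ _ _
  (expR_ge0 (2 * a)) ler01 (fun S _ => weight_ge S).
have mass : expR (2 * a) *+ #|P| + #|[predC P]|%:R
             <= expR (a + 3 / 2 * a ^+ 2) * (2 ^ #|I|)%:R.
  (* 1 + e^(2a) = e^a (e^a + e^(-a)) *)
  have cosh := expR_add_expRN_le (introT andP (conj a_ge0 a_le)).
  have EF : expR a * expR (- a) = 1 by rewrite -expRD subrr expR0.
  have E2 : expR (2 * a) = expR a * expR a.
    by rewrite -expRD -mulr2n mulr_natl.
  have key : expR a * expR a + 1 <= 2 * (expR a * expR (3 / 2 * a ^+ 2)).
    by have := expR_gt0 a; nra.
  have h_ge0 : 0 <= #|P|%:R :> R := ler0n _ _.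
  rewrite (card_predC_xor_coords c ij) -(card_xor_coords c ij) -/P natrM.
  rewrite -[expR (2 * a) *+ _]mulr_natr E2 expRD; nra.
have mass_pow : (expR (2 * a) *+ #|P| + #|[predC P]|%:R) ^+ #|J|
                 <= expR ((a + 3 / 2 * a ^+ 2) * #|J|%:R) * ((2 ^ #|J|) ^ #|I|)%:R.
  rewrite expRM_natr expnAC natrX -exprMn lerXn2r // nnegrE ?mulr_ge0 ?expR_ge0 //.
  by rewrite addr_ge0 ?mulrn_wge0 ?expR_ge0.
rewrite -(ler_pM2r (expR_gt0 (2 * a * T))) -[X in _ <= X]mulrA -expRD.
apply: le_trans bound (le_trans mass_pow _); rewrite mulrC ler_wpM2l // ler_expR.
by rewrite [leRHS](_ : _ = (a + 3 / 2 * a ^+ 2) * #|J|%:R) // /T natrM; field.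
Qed.

Lemma sqr_expR_ln_lt (R : realType) (D : R) : 16 < D ->
  4 * D ^+ 2 * expR (- (5 / 2 * ln D)) < 1.
Proof.
move=> D16; set L := ln D.
have DL : expR L = D by rewrite /L lnK // posrE; lra.
have h_gt0 := expR_gt0 (L / 2).
have hh : expR (L / 2) * expR (L / 2) = D by rewrite -expRD -DL; congr expR; field.
have e : D ^+ 2 * expR (- (5 / 2 * L)) * expR (L / 2) = 1.
  by rewrite -DL -expRM_natr -!expRD (_ : _ + _ = 0) ?expR0 //; field.
nra.
Qed.

Lemma card_rows_bad (R : realType) (I J : finType) (a : R) :
  (16 < #|I|)%N -> 0 <= a -> ((0 < #|J|)%N -> a ^+ 2 * #|J|%:R = ln #|I|%:R) ->
  #|\bigcup_(t : I * I * bool | t.1.1 != t.1.2)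
      [set w : {ffun I -> {ffun J -> bool}} |
         (4^-1 + a) * (#|J| * 2)%:R < #|[set k | w t.1.1 k (+) w t.1.2 k == t.2]|%:R]|%:R * 2
    < ((2 ^ #|J|) ^ #|I|)%:R :> R.
Proof.
move=> I16 a_ge0 aL; set T := (4^-1 + a) * _; set U := \bigcup_(t | _) _.
have N_gt0 : 0 < ((2 ^ #|J|) ^ #|I|)%:R :> R by rewrite ltr0n !expn_gt0.
have [JT | TJ] := leP (#|J|%:R) T.
  rewrite (_ : U = set0) ?cards0 ?mul0r //; apply/setP => w; rewrite inE.
  by apply/bigcupP => -[t _]; rewrite inE ltNge (le_trans _ JT) // ler_nat max_card.
have T_ge0 : 0 <= T by rewrite mulr_ge0 ?addr_ge0 ?invr_ge0 ?ler0n.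
have J_gt0 : (0 < #|J|)%N by rewrite -(@ltr0n R); exact: le_lt_trans T_ge0 TJ.
have a_lt : a < 4^-1.
  have : 0 < #|J|%:R :> R by rewrite ltr0n.
  by move: TJ; rewrite /T natrM; nra.
set N := ((2 ^ #|J|) ^ #|I|)%:R; pose X : R := expR (- (5 / 2 * ln #|I|%:R)).
have U_le : #|U|%:R <= (#|I| ^ 2 * 2)%:R * (N * X).
  apply: le_trans (_ : (\sum_(t | t.1.1 != t.1.2) N * X) <= _).
    pose F t := [set w : {ffun I -> {ffun J -> bool}} |
                   T < #|[set k | w t.1.1 k (+) w t.1.2 k == t.2]|%:R].
    have : (#|U| <= \sum_(t | t.1.1 != t.1.2) #|F t|)%N := card_bigcup_le _ F.
    rewrite -(ler_nat R) natr_sum => /le_trans; apply; apply: ler_sum => t tt.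
    rewrite /X -(aL J_gt0); apply: card_row_bad tt _; rewrite a_ge0 /=; lra.
  rewrite sumr_const mulr_natl; apply: ler_wpMn2l; first by rewrite mulr_ge0 ?expR_ge0 ?ltW.
  by rewrite (leq_trans (max_card _)) // !card_prod card_bool mulnn.
have := sqr_expR_ln_lt (_ : 16 < #|I|%:R :> R); rewrite ltr_nat => /(_ I16).
rewrite natrM natrX /X in U_le; nra.
Qed.

Lemma exists_balanced_signs (R : realType) (I J : finType) (e : nat) (a : R) :
  (200 <= #|I|)%N -> (200 * e <= #|I|)%N -> (4 * #|J| ^ 2 <= 4 ^ e)%N -> 0 <= a ->
  ((0 < #|J|)%N -> a ^+ 2 * #|J|%:R = ln #|I|%:R) ->
  exists w : {ffun I -> {ffun J -> bool}},
    (forall i j c, i != j ->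
       #|[set k | w i k (+) w j k == c]|%:R <= (4^-1 + a) * (#|J| * 2)%:R) /\
    (forall k k' s, k != k' -> 16 * #|[set i | w i k (+) w i k' == s]| <= 9 * #|I|)%N.
Proof.
move=> I200 eI Je a_ge0 aL.
have rows := card_rows_bad (leq_trans (isT : 16 < 200)%N I200) a_ge0 aL.
have cols := card_cols_bad Je eI.
set Ur := \bigcup_(t | _) _ in rows; set Uc := \bigcup_(t | _) _ in cols.
have /set0Pn[w] : ~: (Ur :|: Uc) != set0.
  rewrite -card_gt0 -(ltn_add2l #|Ur :|: Uc|) addn0 cardsC card_ffun !card_ffun card_bool.
  apply: leq_ltn_trans (leq_card_setU Ur Uc).1 _.
  by move: rows; rewrite -natrM ltr_nat; lia.
rewrite !inE negb_or => /andP[/bigcupP w_rows /bigcupP w_cols]; exists w; split.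
  move=> i j c ij; rewrite leNgt; apply/negP => bad; apply: w_rows.
  by exists (i, j, c); rewrite ?inE.
move=> k k' s kk'; rewrite leqNgt; apply/negP => bad; apply: w_cols.
by exists (k, k', s); rewrite ?inE.
Qed.

Lemma card_ord_bool (m : nat) : #|{: 'I_m * bool}| = (m * 2)%N.
Proof. by rewrite card_prod card_ord card_bool. Qed.

Definition pair_of_ord (m : nat) (x : 'I_(m * 2)) : 'I_m * bool :=
  enum_val (cast_ord (esym (card_ord_bool m)) x).

Lemma pair_of_ord_bij (m : nat) : bijective (@pair_of_ord m).
Proof.
exists (fun p => cast_ord (card_ord_bool m) (enum_rank p)) => [x | p].
  by rewrite /pair_of_ord enum_valK cast_ordKV.
by rewrite /pair_of_ord cast_ordK enum_rankK.
Qed.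

Definition side (m : nat) (v : {ffun 'I_m -> bool}) (x : 'I_(m * 2)) : bool :=
  (pair_of_ord x).2 (+) v (pair_of_ord x).1.

Definition sign_bipartition (m : nat) (v : {ffun 'I_m -> bool}) :
  {set 'I_(m * 2)} * {set 'I_(m * 2)} :=
  ([set x | side v x == false], [set x | side v x == true]).

Lemma bpart_sign_bipartition (m : nat) (v : {ffun 'I_m -> bool}) (l : bool) :
  bpart (sign_bipartition v) l = [set x | side v x == l].
Proof. by case: l. Qed.

Lemma card_sign_bipartitionI (m : nat) (u v : {ffun 'I_m -> bool}) (l l' : bool) :
  #|bpart (sign_bipartition u) l :&: bpart (sign_bipartition v) l'|
    = #|[set k | u k (+) v k == l (+) l']|.
Proof.
rewrite !bpart_sign_bipartition -setIdE.
rewrite (_ : [set x in _ | _] = @pair_of_ord m @^-1: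
           [set p | (p.2 (+) u p.1 == l) && (p.2 (+) v p.1 == l')]); last first.
  by apply/setP => x; rewrite !inE.
rewrite on_card_preimset; last exact/onW_bij/pair_of_ord_bij.
rewrite -(card_imset _ (_ : injective (fun k => (k, u k (+) l)))); last by move=> k k' [].
congr #|pred_of_set _|; apply/setP => -[k b]; rewrite !inE.
apply/andP/imsetP => [[eu ev] | [k' + [-> ->]]]; last first.
  by rewrite inE /=; case: (u k') (v k') l l' => [] [] [] [].
by exists k; rewrite ?inE; move: eu ev; case: b (u k) (v k) l l' => [] [] [] [] [].
Qed.

Lemma sign_bipartition_equitable (m : nat) (v : {ffun 'I_m -> bool}) :
  equitable_bipartition (sign_bipartition v).
Proof.
have card_part l : #|bpart (sign_bipartition v) l| = m.
  rewrite -[bpart _ l]setIid card_sign_bipartitionI addbb -[RHS]card_ord.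
  by apply: eq_card => k; rewrite inE addbb.
apply/and3P; split.
- by apply/eqP/setP => x; rewrite !inE; case: (side v x).
- by apply/eqP/setP => x; rewrite !inE; case: (side v x).
- by have := card_part false; have := card_part true; move=> /= -> ->.
Qed.

Lemma same_part_sign_bipartition (I : finType) (m : nat) (w : I -> {ffun 'I_m -> bool})
    (x y : 'I_(m * 2)) :
  [set i | ((x \in (sign_bipartition (w i)).1) && (y \in (sign_bipartition (w i)).1))
           || ((x \in (sign_bipartition (w i)).2) && (y \in (sign_bipartition (w i)).2))]
    = [set i | side (w i) x == side (w i) y].
Proof. by apply/setP => i; rewrite !inE; case: (side _ x) (side _ y) => [] []. Qed.

Lemma card_same_side (I : finType) (m : nat) (w : I -> {ffun 'I_m -> bool})
    (P : pred nat) (x y : 'I_(m * 2)) : x != y -> P 0 ->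
  (forall k k' s, k != k' -> P #|[set i | w i k (+) w i k' == s]|) ->
  P #|[set i | side (w i) x == side (w i) y]|.
Proof.
move=> xy P0 col_P; have pq : pair_of_ord x != pair_of_ord y.
  by apply: contra xy => /eqP /(bij_inj (pair_of_ord_bij m)) ->.
rewrite /side; case: (pair_of_ord x) (pair_of_ord y) pq => k b1 [k' b2] /= pq.
have [kk' | kk'] := eqVneq k k'. (* then b1 != b2, so x and y are never on one side *)
  rewrite (_ : [set i | _] = set0) ?cards0 //; apply/setP => i; rewrite !inE -kk'.
  by move: pq; rewrite -kk' xpair_eqE eqxx /=; case: b1 b2 (w i k) => [] [] [].
rewrite (eq_card (_ : _ =i [set i | w i k (+) w i k' == b1 (+) b2])) ?col_P // => i.
by rewrite !inE; case: (w i k) (w i k') => [] []; case: b1 b2 {pq} => [] [].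
Qed.

Theorem lemma5p1 (R : realType) (d n : nat) :
  (200 <= d)%N -> ~~ odd n -> (n <= 2 ^ (d %/ 200))%N ->
  exists B : 'I_d -> {set 'I_n} * {set 'I_n},
    ndab_sequence B (Num.sqrt (2 * ln (d%:R : R) / n%:R)) (16^-1 : R).
Proof.
move=> d200 n_even; have [m ->] : exists m, n = (m * 2)%N.
  by exists n./2; rewrite -[LHS](odd_double_half n) (negbTE n_even) add0n muln2.
move=> n_le.
set a := Num.sqrt _.
have aL : (0 < #|'I_m|)%N -> a ^+ 2 * #|'I_m|%:R = ln #|'I_d|%:R.
  rewrite !card_ord => m_gt0.
  have d_ge1 : 1 <= d%:R :> R by rewrite ler1n (leq_trans _ d200).
  rewrite sqr_sqrtr ?divr_ge0 ?mulr_ge0 ?ln_ge0 // natrM; field.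
  by rewrite pnatr_eq0 -lt0n.
have Je : (4 * #|'I_m| ^ 2 <= 4 ^ (d %/ 200))%N.
  rewrite card_ord (expnAC 2 2) (_ : 4 * m ^ 2 = (m * 2) ^ 2)%N ?leq_exp2r //.
  by rewrite expnMn mulnC.
have dI : (200 <= #|'I_d|)%N by rewrite card_ord.
have eI : (200 * (d %/ 200) <= #|'I_d|)%N by rewrite card_ord mulnC leq_divM.
have [w [w_rows w_cols]] := exists_balanced_signs dI eI Je (sqrtr_ge0 _) aL.
exists (fun i => sign_bipartition (w i)); split; [|split].
- by move=> i; apply: sign_bipartition_equitable.
- move=> i j l l' ij; rewrite card_sign_bipartitionI -[m in (m * 2)%N](card_ord m).
  by apply: w_rows; rewrite -val_eqE neq_ltn ij.
- move=> x y xy; rewrite same_part_sign_bipartition.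
  have := @card_same_side _ _ w (fun c => 16 * c <= 9 * #|'I_d|)%N x y xy isT w_cols.
  by rewrite /= card_ord -(ler_nat R) !natrM; lra.
Qed.
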